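(* Let $\mathcal X$ be a linear Abelian category over a field $\mathbb F$. Then the category of tempered persistence objects in $\mathcal X$ is Krull–Schmidt.
   Context: An additive category is linear over $\mathbb F$ if each $\mathrm{Hom}(X,Y)$ is a finite-dimensional $\mathbb F$-vector space and composition is $\mathbb F$-bilinear. A persistence object in $\mathcal X$ is a diagram $(X_p, \phi_p:X_{p}\to X_{p+1})_{p\in\mathbb Z}$ in $\mathcal X$; a morphism $(X_p)\to(X'_p)$ is a family of morphisms $f_p:X_p\to X'_p$ with $f_{p+1}\circ\phi_p=\phi'_p\circ f_p$ for all $p$. A persistence object is tempered if all but finitely many of the arrows $\phi_p$ are isomorphisms. An object of an additive category is indecomposable if it is nonzero and not isomorphic to a direct sum of two nonzero objects. A ring is local if $1\neq 0$ and for every element $f$, if $f$ is not invertible then $1-f$ is invertible. An additive category is Krull–Schmidt if every object is isomorphic to a finite direct sum of indecomposable objects and every indecomposable object has a local endomorphism ring. *)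

From HB Require Import structures.
From mathcomp Require Import all_boot all_order all_algebra.
Set Implicit Arguments.
Unset Strict Implicit.
Unset Printing Implicit Defensive.
Import GRing.Theory.
Local Open Scope ring_scope.

Record LinCat (F : fieldType) := {
  Ob : Type;
  Hom : Ob -> Ob -> vectType F;
  comp : forall X Y Z : Ob, Hom Y Z -> Hom X Y -> Hom X Z;
  idm : forall X : Ob, Hom X X;
  compA : forall X Y Z W (h : Hom Z W) (g : Hom Y Z) (f : Hom X Y),
      comp h (comp g f) = comp (comp h g) f;
  comp1m : forall X Y (f : Hom X Y), comp (idm Y) f = f;
  compm1 : forall X Y (f : Hom X Y), comp f (idm X) = f;
  comp_linl : forall X Y Z (a : F) (g1 g2 : Hom Y Z) (f : Hom X Y),
      comp (a *: g1 + g2) f = a *: comp g1 f + comp g2 f;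
  comp_linr : forall X Y Z (a : F) (g : Hom Y Z) (f1 f2 : Hom X Y),
      comp g (a *: f1 + f2) = a *: comp g f1 + comp g f2
}.

Arguments Ob {F}.
Arguments Hom {F} l _ _.
Arguments comp {F l X Y Z}.
Arguments idm {F l}.

Section AbelianDefs.
Variables (F : fieldType) (C : LinCat F).

Definition is_kernel (X Y K : Ob C) (f : Hom C X Y) (k : Hom C K X) : Prop :=
  comp f k = 0 /\
  forall W (g : Hom C W X), comp f g = 0 ->
    exists h : Hom C W K, comp k h = g /\ forall h', comp k h' = g -> h' = h.

Definition is_cokernel (X Y Q : Ob C) (f : Hom C X Y) (q : Hom C Y Q) : Prop :=
  comp q f = 0 /\
  forall W (g : Hom C Y W), comp g f = 0 ->
    exists h : Hom C Q W, comp h q = g /\ forall h', comp h' q = g -> h' = h.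

Definition is_mono (X Y : Ob C) (f : Hom C X Y) : Prop :=
  forall W (g h : Hom C W X), comp f g = comp f h -> g = h.

Definition is_epi (X Y : Ob C) (f : Hom C X Y) : Prop :=
  forall W (g h : Hom C Y W), comp g f = comp h f -> g = h.

Definition is_iso (X Y : Ob C) (f : Hom C X Y) : Prop :=
  exists g : Hom C Y X, comp g f = idm X /\ comp f g = idm Y.

End AbelianDefs.

Record LinAbCat (F : fieldType) := {
  lcat :> LinCat F;
  zero_obj : exists Z : Ob lcat, forall X : Ob lcat,
      (forall f g : Hom lcat Z X, f = g) /\ (forall f g : Hom lcat X Z, f = g);
  biprod : forall A B : Ob lcat, exists (S : Ob lcat)
      (i1 : Hom lcat A S) (i2 : Hom lcat B S) (p1 : Hom lcat S A) (p2 : Hom lcat S B),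
      [/\ comp p1 i1 = idm A, comp p2 i2 = idm B, comp p1 i2 = 0, comp p2 i1 = 0
        & comp i1 p1 + comp i2 p2 = idm S];
  has_kernels : forall (X Y : Ob lcat) (f : Hom lcat X Y),
      exists (K : Ob lcat) (k : Hom lcat K X), is_kernel f k;
  has_cokernels : forall (X Y : Ob lcat) (f : Hom lcat X Y),
      exists (Q : Ob lcat) (q : Hom lcat Y Q), is_cokernel f q;
  mono_kernel : forall (X Y : Ob lcat) (f : Hom lcat X Y), is_mono f ->
      exists (Z : Ob lcat) (g : Hom lcat Y Z), is_kernel g f;
  epi_cokernel : forall (X Y : Ob lcat) (f : Hom lcat X Y), is_epi f ->
      exists (W : Ob lcat) (g : Hom lcat W X), is_cokernel g f
}.

Section Persistence.
Variables (F : fieldType) (C : LinCat F).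

Record pobj := PObj {
  pX : int -> Ob C;
  pphi : forall p : int, Hom C (pX p) (pX (p + 1))
}.

Definition tempered (P : pobj) : Prop :=
  exists s : seq int, forall p : int, p \notin s -> is_iso (pphi P p).

Definition pfam (P Q : pobj) := forall p : int, Hom C (pX P p) (pX Q p).

Definition is_pmor (P Q : pobj) (f : pfam P Q) : Prop :=
  forall p : int, comp (f (p + 1)) (pphi P p) = comp (pphi Q p) (f p).

Definition peq (P Q : pobj) (f g : pfam P Q) : Prop := forall p, f p = g p.
Definition pcomp (P Q R : pobj) (g : pfam Q R) (f : pfam P Q) : pfam P R :=
  fun p => comp (g p) (f p).
Definition pid (P : pobj) : pfam P P := fun p => idm (pX P p).
Definition pzero (P Q : pobj) : pfam P Q := fun p => 0.

Definition p_iso (P Q : pobj) : Prop :=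
  exists (f : pfam P Q) (g : pfam Q P), [/\ is_pmor f, is_pmor g,
    peq (pcomp g f) (pid P) & peq (pcomp f g) (pid Q)].

Definition pis_zero (P : pobj) : Prop :=
  forall Q : pobj, tempered Q ->
    ((exists f : pfam P Q, is_pmor f) /\
     forall f g : pfam P Q, is_pmor f -> is_pmor g -> peq f g) /\
    ((exists f : pfam Q P, is_pmor f) /\
     forall f g : pfam Q P, is_pmor f -> is_pmor g -> peq f g).

Definition is_dsum (S : pobj) (n : nat) (Y : 'I_n -> pobj)
    (i : forall k, pfam (Y k) S) (pr : forall k, pfam S (Y k)) : Prop :=
  [/\ forall k, is_pmor (i k) /\ is_pmor (pr k),
      forall k, peq (pcomp (pr k) (i k)) (pid (Y k)),
      forall k l, k != l -> peq (pcomp (pr k) (i l)) (pzero (Y l) (Y k))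
    & forall p, \sum_(k < n) comp (i k p) (pr k p) = idm (pX S p)].

Definition is_dsum2 (S A B : pobj) (i1 : pfam A S) (i2 : pfam B S)
    (p1 : pfam S A) (p2 : pfam S B) : Prop :=
  [/\ is_pmor i1 /\ is_pmor i2 /\ is_pmor p1 /\ is_pmor p2,
      peq (pcomp p1 i1) (pid A) /\ peq (pcomp p2 i2) (pid B),
      peq (pcomp p1 i2) (pzero B A) /\ peq (pcomp p2 i1) (pzero A B)
    & forall p, comp (i1 p) (p1 p) + comp (i2 p) (p2 p) = idm (pX S p)].

Definition indecomposable (P : pobj) : Prop :=
  ~ pis_zero P /\
  ~ (exists (S A B : pobj) (i1 : pfam A S) (i2 : pfam B S)
        (p1 : pfam S A) (p2 : pfam S B),
       tempered S /\ tempered A /\ tempered B /\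
       ~ pis_zero A /\ ~ pis_zero B /\
       is_dsum2 i1 i2 p1 p2 /\ p_iso P S).

Definition pinvertible (P : pobj) (f : pfam P P) : Prop :=
  exists g : pfam P P, [/\ is_pmor g, peq (pcomp g f) (pid P) & peq (pcomp f g) (pid P)].

Definition one_minus (P : pobj) (f : pfam P P) : pfam P P :=
  fun p => idm (pX P p) - f p.

Definition local_End (P : pobj) : Prop :=
  ~ peq (pid P) (pzero P P) /\
  forall f : pfam P P, is_pmor f -> ~ pinvertible f -> pinvertible (one_minus f).

Definition tempered_KrullSchmidt : Prop :=
  (forall P : pobj, tempered P ->
     exists (n : nat) (Y : 'I_n -> pobj) (S : pobj)
            (i : forall k, pfam (Y k) S) (pr : forall k, pfam S (Y k)),
       [/\ forall k, tempered (Y k) /\ indecomposable (Y k),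
           tempered S, is_dsum i pr & p_iso P S]) /\
  (forall P : pobj, tempered P -> indecomposable P -> local_End P).

End Persistence.

From HB Require Import structures.
From mathcomp Require Import all_boot all_order all_algebra zify ring.
From Stdlib Require Import Classical ClassicalEpsilon.

Set Implicit Arguments.
Unset Strict Implicit.
Unset Printing Implicit Defensive.
Import GRing.Theory.
Local Open Scope ring_scope.

(** Morphisms between tempered persistence objects are determined by their
    components on a finite window of degrees, since away from the finitely
    many non-invertible arrows a component propagates along isomorphisms.
    This makes [End(P)] behave like a finite-dimensional algebra.
    Idempotents split degreewise (idempotents split in an abelian category),
    and the pieces are again tempered.  Splitting the identity into
    orthogonal primitive idempotents, by induction on the total rank of the
    idempotents over the window, decomposes [P] into indecomposables.
    Locality of [End(P)] for indecomposable [P] is Fitting's lemma: one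
    nonzero polynomial annihilates every component of an endomorphism [a],
    and Bezout for its factors [X^m] and [Q'] with [Q'(0) != 0] produces an
    idempotent polynomial in [a]; it is [1], making [a] invertible, or [0],
    making [a] nilpotent and [1 - a] invertible. *)

Lemma dependent_choice (I : Type) (T : I -> Type) (R : forall i, T i -> Prop) :
  (forall i, exists t, R i t) -> exists f : forall i, T i, forall i, R i (f i).
Proof.
move=> h; exists (fun i => proj1_sig (constructive_indefinite_description _ (h i))).
by move=> i; exact: proj2_sig (constructive_indefinite_description _ (h i)).
Qed.

Section LinearComposition.
Variables (F : fieldType) (C : LinCat F) (X Y Z : Ob C).

Implicit Types (f : Hom C X Y) (g : Hom C Y Z).

Definition precomp f g := comp g f.
Definition postcomp g f := comp g f.

Lemma precomp_is_linear f : linear (precomp f).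
Proof. by move=> a u v; rewrite /precomp comp_linl. Qed.
Lemma postcomp_is_linear g : linear (postcomp g).
Proof. by move=> a u v; rewrite /postcomp comp_linr. Qed.

HB.instance Definition _ f :=
  GRing.isLinear.Build F _ _ _ (precomp f) (precomp_is_linear f).
HB.instance Definition _ g :=
  GRing.isLinear.Build F _ _ _ (postcomp g) (postcomp_is_linear g).

Lemma comp0l f : comp (0 : Hom C Y Z) f = 0.
Proof. exact: (linear0 (precomp f)). Qed.
Lemma comp0r g : comp g (0 : Hom C X Y) = 0.
Proof. exact: (linear0 (postcomp g)). Qed.
Lemma compDl f (g1 g2 : Hom C Y Z) : comp (g1 + g2) f = comp g1 f + comp g2 f.
Proof. exact: (linearD (precomp f)). Qed.
Lemma compDr g (f1 f2 : Hom C X Y) : comp g (f1 + f2) = comp g f1 + comp g f2.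
Proof. exact: (linearD (postcomp g)). Qed.
Lemma compBl f (g1 g2 : Hom C Y Z) : comp (g1 - g2) f = comp g1 f - comp g2 f.
Proof. exact: (linearB (precomp f)). Qed.
Lemma compBr g (f1 f2 : Hom C X Y) : comp g (f1 - f2) = comp g f1 - comp g f2.
Proof. exact: (linearB (postcomp g)). Qed.
Lemma compZl f a g : comp (a *: g) f = a *: comp g f.
Proof. by rewrite -[a *: g]addr0 comp_linl comp0l addr0. Qed.
Lemma compZr g a f : comp g (a *: f) = a *: comp g f.
Proof. by rewrite -[a *: f]addr0 comp_linr comp0r addr0. Qed.

End LinearComposition.

Section PersistenceMorphisms.
Variables (F : fieldType) (C : LinCat F).
Implicit Types P Q R : pobj C.

Definition idem P (e : pfam P P) := forall p, comp (e p) (e p) = e p.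

Lemma pmor_id P : is_pmor (pid P).
Proof. by move=> p; rewrite /pid comp1m compm1. Qed.

Lemma pmor_zero P Q : is_pmor (pzero P Q).
Proof. by move=> p; rewrite /pzero comp0l comp0r. Qed.

Lemma pmor_comp P Q R (g : pfam Q R) (f : pfam P Q) :
  is_pmor g -> is_pmor f -> is_pmor (pcomp g f).
Proof. by move=> hg hf p; rewrite /pcomp -compA hf compA hg compA. Qed.

Lemma pmor_sub P Q (f g : pfam P Q) :
  is_pmor f -> is_pmor g -> is_pmor (fun p => f p - g p).
Proof. by move=> hf hg p; rewrite compBl compBr hf hg. Qed.

Lemma pmor_one_minus P (f : pfam P P) : is_pmor f -> is_pmor (one_minus f).
Proof. exact/pmor_sub/pmor_id. Qed.

Lemma idem_one_minus P (e : pfam P P) : idem e -> idem (one_minus e).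
Proof.
by move=> ie p; rewrite /one_minus compBl comp1m compBr compm1 ie subrr subr0.
Qed.

Lemma p_iso_refl P : p_iso P P.
Proof.
exists (pid P), (pid P).
by split; try exact: pmor_id; move=> p; rewrite /pcomp /pid comp1m.
Qed.

Lemma pid0_pis_zero P : peq (pid P) (pzero P P) -> pis_zero P.
Proof.
move=> h0 Q _; have id0 p : idm (pX P p) = 0 := h0 p.
split; split; try by [exists (pzero _ _); exact: pmor_zero].
- by move=> f g _ _ p; rewrite -[f p]compm1 -[g p]compm1 id0 !comp0r.
- by move=> f g _ _ p; rewrite -[f p]comp1m -[g p]comp1m id0 !comp0l.
Qed.

Lemma pis_zeroE P : tempered P -> pis_zero P <-> peq (pid P) (pzero P P).
Proof.
move=> tP; split; last exact: pid0_pis_zero.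
by case/(_ P tP) => -[_ uniq] _; apply: uniq; [exact: pmor_id | exact: pmor_zero].
Qed.

Lemma pmor_eq_iso_step P (f h : pfam P P) p : is_pmor f -> is_pmor h ->
  is_iso (pphi P p) -> f p = h p <-> f (p + 1) = h (p + 1).
Proof.
move=> mf mh [g [g1 g2]]; split => e.
  by rewrite -[f _]compm1 -[h _]compm1 -g2 !compA mf mh e.
by rewrite -[f _]comp1m -[h _]comp1m -g1 -!compA -mf -mh e.
Qed.

End PersistenceMorphisms.

Lemma ltn_sum_seq (I : eqType) (r : seq I) (f g : I -> nat) :
    (forall i, i \in r -> (f i <= g i)%N) -> (exists2 i, i \in r & (f i < g i)%N) ->
  (\sum_(i <- r) f i < \sum_(i <- r) g i)%N.
Proof.
elim: r => [|x r IH] le [i] //; rewrite in_cons !big_cons.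
have le_r j : j \in r -> (f j <= g j)%N by move=> jr; apply: le; rewrite in_cons jr orbT.
case/orP => [/eqP -> lt_x | ir lt_i].
  by rewrite -addSn leq_add // big_seq [X in (_ <= X)%N]big_seq leq_sum.
by rewrite -addnS leq_add ?le ?in_cons ?eqxx //; apply: IH => //; exists i.
Qed.

Lemma int_window (s : seq int) : exists W : seq int, forall Q : int -> Prop,
  (forall p, p \notin s -> Q p <-> Q (p + 1)) ->
  (forall p, p \in W -> Q p) -> forall p, Q p.
Proof.
have [B bound] : exists B : nat, forall x, x \in s -> (absz x <= B)%N.
  by exists (\max_(x <- s) absz x)%N => x /(leq_bigmax_seq (F := absz)); apply.
have outside p : (p < - B%:Z) \/ (B%:Z < p) -> p \notin s.
  by move=> hp; apply/negP => /bound; case: hp; lia.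
exists [seq i%:Z - B%:Z | i <- iota 0 (2 * B).+2] => Q step inW.
have window p : - B%:Z <= p <= B%:Z + 1 -> Q p.
  move=> hp; apply: inW; apply/mapP; exists (absz (p + B%:Z)); rewrite ?mem_iota; lia.
have below n : Q (- B%:Z - n%:Z).
  elim: n => [|n IH]; first by apply: window; lia.
  apply/step; first by apply: outside; left; lia.
  by have -> : - B%:Z - n.+1%:Z + 1 = - B%:Z - n%:Z by lia.
have above n : Q (B%:Z + 1 + n%:Z).
  elim: n => [|n IH]; first by apply: window; lia.
  have -> : B%:Z + 1 + n.+1%:Z = (B%:Z + 1 + n%:Z) + 1 by lia.
  have out : B%:Z + 1 + n%:Z \notin s by apply: outside; right; lia.
  exact/(step _ out).
move=> p; have [hlo|hlo] := boolP (p < - B%:Z).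
  by have -> : p = - B%:Z - (absz (- B%:Z - p)%R)%:Z by lia.
have [hhi|hhi] := boolP (p <= B%:Z + 1); first by apply: window; lia.
by have -> : p = B%:Z + 1 + (absz (p - B%:Z - 1)%R)%:Z by lia.
Qed.

Lemma tempered_pmor_window (F : fieldType) (C : LinCat F) (P : pobj C) :
  tempered P -> exists W : seq int, forall f h : pfam P P, is_pmor f -> is_pmor h ->
    (forall p, p \in W -> f p = h p) -> peq f h.
Proof.
case=> s iso; have [W hW] := int_window s.
by exists W => f h mf mh; apply: hW => p /iso; exact: pmor_eq_iso_step.
Qed.

Section Retracts.
Variables (F : fieldType) (C : LinCat F).

Lemma retract_iso (X X' Y Y' : Ob C) (phi : Hom C X X')
    (k : Hom C Y X) (r : Hom C X Y) (e : Hom C X X)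
    (k' : Hom C Y' X') (r' : Hom C X' Y') (e' : Hom C X' X') :
  comp r k = idm Y -> comp k r = e -> comp r' k' = idm Y' -> comp k' r' = e' ->
  comp e' phi = comp phi e -> is_iso phi -> is_iso (comp r' (comp phi k)).
Proof.
move=> rk kr rk' kr' nat_e [g [g1 g2]].
have nat_eg : comp g e' = comp e g.
  by rewrite -[LHS]compm1 -g2 !compA -[comp (comp g e') _]compA nat_e compA g1 comp1m.
have ek : comp e k = k by rewrite -kr -compA rk compm1.
have ek' : comp e' k' = k' by rewrite -kr' -compA rk' compm1.
exists (comp r (comp g k')); split.
  by rewrite -!compA [comp k' _]compA kr' [comp e' _]compA nat_e -compA ek
    [comp g _]compA g1 comp1m rk.
by rewrite -!compA [comp k _]compA kr [comp e _]compA -nat_eg -compA ek'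
  [comp phi _]compA g2 comp1m rk'.
Qed.

Variables (P A : pobj C).

Definition psplit (e : pfam P P) (k : pfam A P) (r : pfam P A) :=
  [/\ is_pmor k, is_pmor r, forall p, comp (r p) (k p) = idm (pX A p)
    & forall p, comp (k p) (r p) = e p].

Variables (e : pfam P P) (k : pfam A P) (r : pfam P A).
Hypothesis split_e : psplit e k r.

Lemma psplit_ek p : comp (e p) (k p) = k p.
Proof. by case: split_e => _ _ rk <-; rewrite -compA rk compm1. Qed.

Lemma psplit_re p : comp (r p) (e p) = r p.
Proof. by case: split_e => _ _ rk <-; rewrite compA rk comp1m. Qed.

Lemma psplit_id0 : peq (pid A) (pzero A A) <-> peq e (pzero P P).
Proof.
case: split_e => _ _ rk kr; split=> h p; rewrite /pzero.
  by rewrite -kr -[r p]comp1m (h p : idm _ = 0) comp0l comp0r.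
by rewrite /pid -rk -psplit_ek (h p : e p = 0) comp0l comp0r.
Qed.

End Retracts.

Section IdempotentSplitting.
Variables (F : fieldType) (C : LinAbCat F).

(* The image of an idempotent [e] is the kernel of [1 - e]. *)
Lemma split_idem (X : Ob C) (e : Hom C X X) : comp e e = e ->
  exists (Y : Ob C) (k : Hom C Y X) (r : Hom C X Y),
    comp r k = idm Y /\ comp k r = e.
Proof.
move=> ee.
have [K [k [k0 kU]]] := has_kernels (idm X - e).
have [|r [kr _]] := kU X e; first by rewrite compBl comp1m ee subrr.
exists K, k, r; split=> //.
have [h [_ uniq]] := kU K k k0.
have ek : comp e k = k by move/eqP: k0; rewrite compBl comp1m subr_eq0 => /eqP <-.
rewrite (uniq (comp r k)); last by rewrite compA kr ek.
by rewrite (uniq (idm K)) // compm1.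
Qed.

Lemma pidem_split (P : pobj C) (e : pfam P P) : tempered P -> is_pmor e -> idem e ->
  exists (A : pobj C) (k : pfam A P) (r : pfam P A), tempered A /\ psplit e k r.
Proof.
move=> [s iso] me ie.
have [Y /dependent_choice [k /dependent_choice [r kr]]] :=
  dependent_choice (fun p => split_idem (ie p)).
have rk p := proj1 (kr p); have {}kr p := proj2 (kr p).
have ek p : comp (e p) (k p) = k p by rewrite -kr -compA rk compm1.
have re p : comp (r p) (e p) = r p by rewrite -kr compA rk comp1m.
exists (PObj (fun p => comp (r (p + 1)) (comp (pphi P p) (k p)))), k, r.
split; first by exists s => p /iso; apply: retract_iso; rewrite ?me.
split=> // p /=; first by rewrite compA kr compA me -compA ek.
by rewrite -!compA kr -me compA re.
Qed.

Lemma pidem_dsum2 (P : pobj C) (e : pfam P P) : tempered P -> is_pmor e -> idem e ->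
  exists (A B : pobj C) (kA : pfam A P) (kB : pfam B P) (rA : pfam P A) (rB : pfam P B),
  [/\ tempered A, tempered B, psplit e kA rA, psplit (one_minus e) kB rB
    & is_dsum2 kA kB rA rB].
Proof.
move=> tP me ie.
have [A [kA [rA [tA sA]]]] := pidem_split tP me ie.
have [B [kB [rB [tB sB]]]] :=
  pidem_split tP (pmor_one_minus me) (idem_one_minus ie).
exists A, B, kA, kB, rA, rB; split=> //.
case: (sA) (sB) => mkA mrA rkA krA [mkB mrB rkB krB].
have e_e' p : comp (e p) (one_minus e p) = 0.
  by rewrite /one_minus compBr compm1 ie subrr.
have e'_e p : comp (one_minus e p) (e p) = 0.
  by rewrite /one_minus compBl comp1m ie subrr.
split.
- by do !split.
- by split=> p; [exact: rkA | exact: rkB].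
- split=> p; rewrite /pcomp /pzero.
    by rewrite -(psplit_re sA) -(psplit_ek sB) -compA [comp (e p) _]compA e_e'
      comp0l comp0r.
  by rewrite -(psplit_re sB) -(psplit_ek sA) -compA [comp (one_minus e p) _]compA
    e'_e comp0l comp0r.
- by move=> p; rewrite krA krB /one_minus addrC subrK.
Qed.

End IdempotentSplitting.

Section Indecomposables.
Variables (F : fieldType) (C : LinAbCat F) (P : pobj C).
Hypothesis tP : tempered P.

Lemma indec_of_idem : ~ peq (pid P) (pzero P P) ->
    (forall e : pfam P P, is_pmor e -> idem e ->
       peq e (pzero P P) \/ peq e (pid P)) ->
  indecomposable P.
Proof.
move=> nz trivial; split; first by move/(pis_zeroE tP).
case=> S [A [B [i1 [i2 [p1 [p2 [_ [tA [tB [nA [nB [ds [f [g [mf mg _ fg]]]]]]]]]]]]]]].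
case: ds => -[mi1 [_ [mp1 _]]] [p1i1 p2i2] [_ p2i1] _.
have {}fg p : comp (f p) (g p) = idm _ := fg p.
have {}p1i1 p : comp (p1 p) (i1 p) = idm _ := p1i1 p.
have {}p2i2 p : comp (p2 p) (i2 p) = idm _ := p2i2 p.
have {}p2i1 p : comp (p2 p) (i1 p) = 0 := p2i1 p.
pose e := pcomp g (pcomp i1 (pcomp p1 f)).
have transport p : comp (f p) (comp (e p) (g p)) = comp (i1 p) (p1 p).
  by rewrite /e /pcomp -!compA fg compm1 compA fg comp1m.
have ie : idem e.
  move=> p; rewrite /e /pcomp -!compA [comp (f p) (comp (g p) _)]compA fg comp1m.
  by rewrite [comp (p1 p) (comp (i1 p) _)]compA p1i1 comp1m.
have [e0|e1] := trivial e (pmor_comp mg (pmor_comp mi1 (pmor_comp mp1 mf))) ie.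
  apply/nA/(pis_zeroE tA) => p; rewrite /pid /pzero -p1i1.
  rewrite -[comp (p1 p) (i1 p)]comp1m -p1i1 -compA [comp (i1 p) _]compA.
  by rewrite -transport (e0 p : e p = 0) comp0l comp0r comp0l comp0r.
apply/nB/(pis_zeroE tB) => p.
have i1p1 : comp (i1 p) (p1 p) = idm _.
  by rewrite -transport (e1 p : e p = idm _) comp1m fg.
rewrite /pid /pzero -p2i2 -[i2 p]comp1m -i1p1 compA.
by rewrite [comp (p2 p) (comp _ _)]compA p2i1 !comp0l.
Qed.

Lemma idem_of_indec : indecomposable P ->
  forall e : pfam P P, is_pmor e -> idem e -> peq e (pzero P P) \/ peq e (pid P).
Proof.
move=> [_ nodec] e me ie; apply: NNPP => nontrivial; apply: nodec.
have [A [B [kA [kB [rA [rB [tA tB sA sB ds]]]]]]] := pidem_dsum2 tP me ie.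
exists P, A, B, kA, kB, rA, rB; do 3 (split; first by []).
split; first by move/(pis_zeroE tA)/(psplit_id0 sA) => e0; apply: nontrivial; left.
split.
  move/(pis_zeroE tB)/(psplit_id0 sB) => e'0; apply: nontrivial; right => p.
  by move: (e'0 p); rewrite /one_minus /pzero => /eqP; rewrite subr_eq0 => /eqP.
by split; [exact: ds | exact: p_iso_refl].
Qed.

End Indecomposables.

Section EndomorphismPolynomials.
Variables (F : fieldType) (C : LinCat F) (X : Ob C).

(* [Hom C X X] is the zero ring when [X] is a zero object, and MathComp rings
   are nontrivial; the factor [F] restores [1 != 0] without changing the
   evaluation of polynomials on the first component. *)
Definition end_ring : Type := (Hom C X X * F^o)%type.
HB.instance Definition _ := GRing.Lmodule.on end_ring.

Definition end_mul (x y : end_ring) : end_ring := (comp x.1 y.1, x.2 * y.2).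
Definition end_one : end_ring := (idm X, 1).

Lemma end_mulA : associative end_mul.
Proof. by move=> [x1 x2] [y1 y2] [z1 z2]; rewrite /end_mul /= compA mulrA. Qed.
Lemma end_mul1 : left_id end_one end_mul.
Proof. by move=> [x1 x2]; rewrite /end_mul /= comp1m mul1r. Qed.
Lemma end_mulr1 : right_id end_one end_mul.
Proof. by move=> [x1 x2]; rewrite /end_mul /= compm1 mulr1. Qed.
Lemma end_mulDl : left_distributive end_mul +%R.
Proof. by move=> [x1 x2] [y1 y2] [z1 z2]; rewrite /end_mul /= compDl mulrDl. Qed.
Lemma end_mulDr : right_distributive end_mul +%R.
Proof. by move=> [x1 x2] [y1 y2] [z1 z2]; rewrite /end_mul /= compDr mulrDr. Qed.
Lemma end_one_neq0 : end_one != 0.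
Proof. by apply/eqP => -[_] /eqP; rewrite oner_eq0. Qed.

HB.instance Definition _ := GRing.Zmodule_isNzRing.Build end_ring
  end_mulA end_mul1 end_mulr1 end_mulDl end_mulDr end_one_neq0.

Lemma end_scalerAl (c : F) (u v : end_ring) : c *: (u * v) = (c *: u) * v.
Proof.
by case: u v => [u1 u2] [v1 v2]; rewrite /GRing.mul /= /end_mul /= compZl -scalerAl.
Qed.
HB.instance Definition _ := GRing.Lmodule_isLalgebra.Build F end_ring end_scalerAl.

Lemma end_scalerAr (c : F) (u v : end_ring) : c *: (u * v) = u * (c *: v).
Proof.
by case: u v => [u1 u2] [v1 v2]; rewrite /GRing.mul /= /end_mul /= compZr -scalerAr.
Qed.
HB.instance Definition _ :=
  GRing.LSemiAlgebra_isSemiAlgebra.Build F end_ring end_scalerAr.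

Definition horner_end (a : Hom C X X) (q : {poly F}) : Hom C X X :=
  (horner_alg ((a, 0) : end_ring) q).1.

Variable a : Hom C X X.

Lemma horner_end0 : horner_end a 0 = 0.
Proof. by rewrite /horner_end rmorph0. Qed.
Lemma horner_endD q r : horner_end a (q + r) = horner_end a q + horner_end a r.
Proof. by rewrite /horner_end rmorphD. Qed.
Lemma horner_endB q r : horner_end a (q - r) = horner_end a q - horner_end a r.
Proof. by rewrite /horner_end rmorphB. Qed.
Lemma horner_endM q r : horner_end a (q * r) = comp (horner_end a q) (horner_end a r).
Proof. by rewrite /horner_end rmorphM. Qed.
Lemma horner_endC c : horner_end a c%:P = c *: idm X.
Proof. by rewrite /horner_end horner_algC. Qed.
Lemma horner_end1 : horner_end a 1 = idm X.
Proof. by rewrite -[1]/(1%:P) horner_endC scale1r. Qed.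
Lemma horner_endX : horner_end a 'X = a.
Proof. by rewrite /horner_end horner_algX. Qed.
Lemma horner_endZ c q : horner_end a (c *: q) = c *: horner_end a q.
Proof. by rewrite -mul_polyC horner_endM horner_endC compZl comp1m. Qed.
Lemma horner_end_sum (I : Type) (r : seq I) (q : I -> {poly F}) :
  horner_end a (\sum_(i <- r) q i) = \sum_(i <- r) horner_end a (q i).
Proof. by rewrite /horner_end rmorph_sum (big_morph fst (fun _ _ => erefl) erefl). Qed.

Lemma horner_end_dvdp Q R : horner_end a Q = 0 -> Q %| R -> horner_end a R = 0.
Proof. by move=> aQ /dvdpP [S ->]; rewrite horner_endM aQ comp0r. Qed.

(* The [d + 1] powers of [a] are linearly dependent in [Hom C X X]. *)
Lemma horner_end_annihilator : exists q : {poly F}, q != 0 /\ horner_end a q = 0.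
Proof.
pose d := \dim (fullv : {vspace Hom C X X}).
pose T := [tuple horner_end a 'X^i | i < d.+1].
have dep : ~~ free T.
  rewrite /free size_tuple; apply/negP => /eqP dimT.
  by have := dimvS (subvf <<T>>%VS); rewrite dimT ltnn.
have [k [k0 [i ki]]] : exists k : 'I_d.+1 -> F,
    \sum_(i < d.+1) k i *: T`_i = 0 /\ exists i, k i != 0.
  apply: NNPP => nodep; move/negP: dep; apply; apply/freeP => k k0 i.
  apply: NNPP => /eqP ki.
  by apply: nodep; exists k; split; last exists i.
exists (\poly_(j < d.+1) k (inord j)); split.
  apply/eqP => /(congr1 (fun q : {poly F} => q`_i)).
  by rewrite coef_poly ltn_ord inord_val coef0; apply/eqP.
rewrite poly_def horner_end_sum -[RHS]k0; apply: eq_bigr => j _.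
by rewrite horner_endZ inord_val nth_mktuple.
Qed.

End EndomorphismPolynomials.

Lemma horner_end_comm (F : fieldType) (C : LinCat F) (X Y : Ob C)
    (a : Hom C X X) (b : Hom C Y Y) (f : Hom C X Y) :
  comp b f = comp f a -> forall q, comp (horner_end b q) f = comp f (horner_end a q).
Proof.
move=> ab; elim/poly_ind => [|q c IH]; first by rewrite !horner_end0 comp0l comp0r.
rewrite !horner_endD !horner_endM !horner_endX !horner_endC compDl compDr -compA ab.
by rewrite compA IH -compA compZl compZr comp1m compm1.
Qed.

(* Fitting's lemma at the level of polynomials: write [X * Q = X^m * Q'] with
   [Q'(0) != 0] and split [1 = u1 Q' + u2 X^m] by Bezout; then [E := u2 X^m]. *)
Lemma fitting_poly (F : fieldType) (Q : {poly F}) : Q != 0 ->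
  exists (E v : {poly F}) (m : nat),
    [/\ E = 'X * v, Q %| E * (1 - E) & Q %| 'X^m * (1 - E)].
Proof.
move=> Qn0.
have [m [Q' /implyP Q'0 eQ]] := multiplicity_XsubC ('X * Q) 0.
rewrite mulf_neq0 ?polyX_eq0 // in Q'0; have {}Q'0 := Q'0 isT.
rewrite subr0 [RHS]mulrC in eQ.
have m_gt0 : (0 < m)%N.
  case: m eQ => // /(congr1 (horner^~ 0)).
  rewrite expr0 mul1r hornerM hornerX mul0r => Q'00.
  by rewrite /root -Q'00 eqxx in Q'0.
have : coprimep Q' 'X^m.
  by apply: coprimep_expr; rewrite -[X in coprimep _ X]subr0 -polyC0 coprimep_XsubC.
case/Bezout_eq1_coprimepP => -[u1 u2] /= bezout.
have unit_part : 1 - u2 * 'X^m = u1 * Q' by rewrite -bezout addrK.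
exists (u2 * 'X^m), (u2 * 'X^(m.-1)), m; split.
- by rewrite mulrCA -exprS prednK.
- rewrite unit_part (_ : _ * (u1 * Q') = u2 * u1 * ('X^m * Q')); last by ring.
  by rewrite -eQ mulrA dvdp_mull.
- rewrite unit_part (_ : _ * (u1 * Q') = u1 * ('X^m * Q')); last by ring.
  by rewrite -eQ mulrA dvdp_mull.
Qed.

Section Fitting.
Variables (F : fieldType) (C : LinCat F) (P : pobj C) (a : pfam P P).
Hypotheses (tP : tempered P) (ma : is_pmor a).

Lemma pmor_horner_end q : is_pmor (fun p => horner_end (a p) q).
Proof. by move=> p; apply: horner_end_comm; apply: ma. Qed.

Lemma pmor_annihilator : exists Q : {poly F}, Q != 0 /\ forall p, horner_end (a p) Q = 0.
Proof.
have [W detW] := tempered_pmor_window tP.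
have [q ann] := dependent_choice (fun p => horner_end_annihilator (a p)).
exists (\prod_(p <- W) q p); split.
  by rewrite prodf_seq_neq0; apply/allP => p _; case: (ann p).
move=> p; apply: (detW _ (pzero P P) (pmor_horner_end _) (pmor_zero P P)) => {}p pW.
by rewrite (big_rem _ pW) /= horner_endM (proj2 (ann p)) comp0l.
Qed.

Lemma pinvertible_horner_end (f : pfam P P) (u w : {poly F}) :
  (forall p, f p = horner_end (a p) u) ->
  (forall p, horner_end (a p) (u * w) = idm (pX P p)) -> pinvertible f.
Proof.
move=> fu uw; exists (fun p => horner_end (a p) w); split.
- exact: pmor_horner_end.
- by move=> p; rewrite /pcomp fu -horner_endM mulrC uw.
- by move=> p; rewrite /pcomp fu -horner_endM uw.
Qed.

(* The idempotent [e] is the projection onto the part of [P] where [a] is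
   invertible; on its complement [a] is nilpotent. *)
Lemma fitting : exists e : pfam P P, [/\ is_pmor e, idem e,
    peq e (pzero P P) -> pinvertible (one_minus a)
  & peq e (pid P) -> pinvertible a].
Proof.
have [Q [Qn0 aQ]] := pmor_annihilator.
have [E [v [m [Ev QE QXm]]]] := fitting_poly Qn0.
have vanish R p : Q %| R -> horner_end (a p) R = 0.
  by move=> QR; apply: horner_end_dvdp (aQ p) QR.
exists (fun p => horner_end (a p) E); split.
- exact: pmor_horner_end.
- move=> p; have := vanish _ p QE.
  rewrite horner_endM horner_endB horner_end1 compBr compm1 => /eqP.
  by rewrite subr_eq0 => /eqP <-.
- move=> e0; apply: (@pinvertible_horner_end _ (1 - 'X) (\sum_(i < m) 'X^i)).
    by move=> p; rewrite horner_endB horner_end1 horner_endX.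
  move=> p; have nil : horner_end (a p) 'X^m = 0.
    have -> : 'X^m = 'X^m * (1 - E) + 'X^m * E :> {poly F} by ring.
    by rewrite horner_endD vanish // horner_endM (e0 p : horner_end _ _ = 0) comp0r addr0.
  have -> : (1 - 'X) * \sum_(i < m) 'X^i = 1 - 'X^m :> {poly F}.
    by rewrite -[1 - 'X^m]opprB subrX1 -mulNr opprB.
  by rewrite horner_endB horner_end1 nil subr0.
- move=> e1; apply: (@pinvertible_horner_end _ 'X v).
    by move=> p; rewrite horner_endX.
  by move=> p; rewrite -Ev (e1 p).
Qed.

End Fitting.

Lemma local_of_indec (F : fieldType) (C : LinAbCat F) (P : pobj C) :
  tempered P -> indecomposable P -> local_End P.
Proof.
move=> tP indP; split.
  by move/pid0_pis_zero; case: indP.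
move=> f mf noninv; have [e [me ie e0 e1]] := fitting tP mf.
by case: (idem_of_indec tP indP me ie) => [/e0 | /e1] //.
Qed.

Section EndomorphismImages.
Variables (F : fieldType) (C : LinCat F).

Definition end_img (X : Ob C) (x : Hom C X X) : {vspace Hom C X X} :=
  limg (linfun (@postcomp F C X X X x)).

Lemma end_imgP (X : Ob C) (x y : Hom C X X) :
  reflect (exists z, y = comp x z) (y \in end_img x).
Proof.
apply: (iffP memv_imgP) => [[z _ ->] | [z ->]]; exists z; rewrite ?memvf //.
all: by rewrite lfunE.
Qed.

Lemma end_img_sub (X : Ob C) (e e' : Hom C X X) :
  comp e e' = e' -> (end_img e' <= end_img e)%VS.
Proof.
move=> ee'; apply/subvP => y /end_imgP [z ->]; apply/end_imgP.
by exists (comp e' z); rewrite compA ee'.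
Qed.

Lemma end_img_dim_lt (X : Ob C) (e e' : Hom C X X) :
    comp e e' = e' -> comp e' e = e' -> comp e' e' = e' -> e' <> e ->
  (\dim (end_img e') < \dim (end_img e))%N.
Proof.
move=> ee' e'e ie' ne; rewrite ltn_neqAle dimvS ?end_img_sub // andbT.
apply/negP => /eqP dim_eq; apply: ne.
have /eqP img_eq : end_img e' == end_img e by rewrite eqEdim end_img_sub // dim_eq leqnn.
have : e \in end_img e by apply/end_imgP; exists (idm X); rewrite compm1.
by rewrite -img_eq => /end_imgP [z ez]; rewrite -e'e ez compA ie'.
Qed.

End EndomorphismImages.

Section PrimitiveIdempotents.
Variables (F : fieldType) (C : LinCat F) (P : pobj C).
Implicit Types e : pfam P P.

Definition idem_le e' e := peq (pcomp e e') e' /\ peq (pcomp e' e) e'.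

Definition primitive e :=
  ~ peq e (pzero P P) /\
  forall e', is_pmor e' -> idem e' -> idem_le e' e -> peq e' (pzero P P) \/ peq e' e.

Definition prim_decomp e n (es : 'I_n -> pfam P P) :=
  [/\ forall i, [/\ is_pmor (es i), idem (es i) & primitive (es i)],
      forall i j, i != j -> forall p, comp (es i p) (es j p) = 0,
      forall i, idem_le (es i) e
    & forall p, \sum_(i < n) es i p = e p].

Lemma idem_le_trans e1 e2 e3 : idem_le e1 e2 -> idem_le e2 e3 -> idem_le e1 e3.
Proof.
move=> [h21 h12] [h32 h23]; split=> p; rewrite /pcomp.
  by rewrite -(h21 p) compA (h32 p : comp _ _ = _).
by rewrite -(h12 p) -compA (h23 p : comp _ _ = _).
Qed.

Lemma idem_le_orth e1 e2 f1 f2 : idem_le f1 e1 -> idem_le f2 e2 ->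
  (forall p, comp (e1 p) (e2 p) = 0) -> forall p, comp (f1 p) (f2 p) = 0.
Proof.
move=> [_ f1e1] [e2f2 _] orth p.
rewrite -(f1e1 p : comp _ _ = _) -(e2f2 p : comp _ _ = _) -compA [comp (e1 p) _]compA.
by rewrite orth comp0l comp0r.
Qed.

Lemma idem_le_complement e e' : is_pmor e -> idem e -> is_pmor e' -> idem e' ->
    idem_le e' e ->
  let e'' := fun p => e p - e' p in
  [/\ is_pmor e'', idem e'', idem_le e'' e,
      forall p, comp (e' p) (e'' p) = 0 & forall p, comp (e'' p) (e' p) = 0].
Proof.
move=> me ie me' ie' [ee' e'e] e''.
have {}ee' p : comp (e p) (e' p) = e' p := ee' p.
have {}e'e p : comp (e' p) (e p) = e' p := e'e p.
split=> [||||p]; first exact: pmor_sub.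
- by move=> p; rewrite /e'' compBl !compBr ie ie' ee' e'e subrr subr0.
- by split=> p; rewrite /pcomp /e'' ?compBr ?compBl ie ?ee' ?e'e.
- by move=> p; rewrite /e'' compBr e'e ie' subrr.
- by rewrite /e'' compBl ee' ie' subrr.
Qed.

Lemma prim_decomp_cat e e1 e2 n1 n2 (es1 : 'I_n1 -> pfam P P) (es2 : 'I_n2 -> pfam P P) :
    idem_le e1 e -> idem_le e2 e ->
    (forall p, comp (e1 p) (e2 p) = 0) -> (forall p, comp (e2 p) (e1 p) = 0) ->
    (forall p, e1 p + e2 p = e p) -> prim_decomp e1 es1 -> prim_decomp e2 es2 ->
  prim_decomp e (fun i => match split i with inl i1 => es1 i1 | inr i2 => es2 i2 end).
Proof.
move=> le1 le2 o12 o21 sum12 [prim1 orth1 le1' sum1] [prim2 orth2 le2' sum2].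
split.
- by move=> i; case: (split_ordP i) => j _; [exact: prim1 | exact: prim2].
- move=> i j; case: (split_ordP i) => i' ->; case: (split_ordP j) => j' ->;
    rewrite ?eq_lshift ?eq_rshift => ij.
  + exact: orth1.
  + exact: idem_le_orth (le1' i') (le2' j') o12.
  + exact: idem_le_orth (le2' i') (le1' j') o21.
  + exact: orth2.
- move=> i; case: (split_ordP i) => j _.
    exact: idem_le_trans (le1' j) le1.
  exact: idem_le_trans (le2' j) le2.
- move=> p; rewrite big_split_ord /= -sum12 -sum1 -sum2.
  congr (_ + _); apply: eq_bigr => i _.
    by rewrite (unsplitK (inl i : 'I_n1 + 'I_n2)).
  by rewrite (unsplitK (inr i : 'I_n1 + 'I_n2)).
Qed.

Variable W : seq int.
Hypothesis detW : forall f h : pfam P P, is_pmor f -> is_pmor h ->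
  (forall p, p \in W -> f p = h p) -> peq f h.

Definition idem_size e := (\sum_(p <- W) \dim (end_img (e p)))%N.

Lemma idem_size_lt e e' : is_pmor e -> is_pmor e' -> idem e' ->
  idem_le e' e -> ~ peq e' e -> (idem_size e' < idem_size e)%N.
Proof.
move=> me me' ie' [ee' e'e] ne; apply: ltn_sum_seq.
  by move=> p _; apply/dimvS/end_img_sub/(ee' p).
apply: NNPP => eqW; apply/ne/detW => // p pW; apply: NNPP => nep; apply: eqW.
by exists p => //; apply: end_img_dim_lt; [exact: (ee' p) | exact: (e'e p) | exact: ie'|].
Qed.

Lemma prim_decomp_exists e : is_pmor e -> idem e ->
  exists n (es : 'I_n -> pfam P P), prim_decomp e es.
Proof.
have [n] := ubnP (idem_size e); elim: n e => // n IH e size_e me ie.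
have [e0 | ne0] := classic (peq e (pzero P P)).
  by exists 0%N, (fun _ => pzero P P); split=> [[]//|[]//|[]//|p]; rewrite big_ord0 e0.
have [prim_e | nprim_e] := classic (primitive e).
  exists 1%N, (fun _ => e); split=> [//|i j|//|p]; rewrite ?big_ord1 //.
  by rewrite !ord1 eqxx.
have [e' [me' ie' le' ne'0 ne'e]] : exists e', [/\ is_pmor e', idem e', idem_le e' e,
    ~ peq e' (pzero P P) & ~ peq e' e].
  apply: NNPP => none; apply: nprim_e; split=> // e' me' ie' le'.
  apply: NNPP => /Decidable.not_or [ne'0 ne'e]; apply: none; by exists e'.
have [me'' ie'' le'' o12 o21] := idem_le_complement me ie me' ie' le'.
set e'' := fun p => _ in me'' ie'' le'' o12 o21.
have ne''e : ~ peq e'' e.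
  move=> e''e; apply: ne'0 => p.
  have : e p - e' p = e p - 0 by rewrite subr0; exact: e''e p.
  by move/addrI/oppr_inj.
have [n1 [es1 d1]] :=
  IH e' (leq_trans (idem_size_lt me me' ie' le' ne'e) size_e) me' ie'.
have [n2 [es2 d2]] :=
  IH e'' (leq_trans (idem_size_lt me me'' ie'' le'' ne''e) size_e) me'' ie''.
have sum p : e' p + e'' p = e p by rewrite /e'' addrC subrK.
by eexists; eexists; apply: prim_decomp_cat sum d1 d2.
Qed.

End PrimitiveIdempotents.

Section KrullSchmidt.
Variables (F : fieldType) (C : LinAbCat F).

Lemma indec_of_primitive (P A : pobj C) (e : pfam P P) (k : pfam A P) (r : pfam P A) :
  tempered A -> psplit e k r -> primitive e -> indecomposable A.
Proof.
move=> tA sA [ne0 prim]; case: (sA) => mk mr rk _.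
apply: indec_of_idem => // [/(psplit_id0 sA) // | f mf idf].
pose g := pcomp k (pcomp f r).
have rgk p : comp (r p) (comp (g p) (k p)) = f p.
  by rewrite /g /pcomp !compA rk comp1m -compA rk compm1.
have ig : idem g.
  move=> p; rewrite /g /pcomp -!compA [comp (r p) (comp (k p) _)]compA rk comp1m.
  by rewrite [comp (f p) (comp (f p) _)]compA idf.
have le : idem_le g e.
  split=> p; rewrite /pcomp /g /pcomp; first by rewrite compA (psplit_ek sA).
  by rewrite -!compA (psplit_re sA).
case: (prim g (pmor_comp mk (pmor_comp mf mr)) ig le) => hg; [left | right] => p.
  by rewrite /pzero -rgk (hg p : g p = 0) comp0l comp0r.
by rewrite /pid -rgk (hg p : g p = e p) (psplit_ek sA) rk.
Qed.

Lemma tempered_decomposition (P : pobj C) : tempered P ->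
  exists (n : nat) (Y : 'I_n -> pobj C) (S : pobj C)
         (i : forall k, pfam (Y k) S) (pr : forall k, pfam S (Y k)),
    [/\ forall k, tempered (Y k) /\ indecomposable (Y k),
        tempered S, is_dsum i pr & p_iso P S].
Proof.
move=> tP; have [W detW] := tempered_pmor_window tP.
have idP : idem (pid P) by move=> p; rewrite /pid comp1m.
have [n [es [prim orth le sum]]] := prim_decomp_exists detW (pmor_id P) idP.
have split_ex i : exists (A : pobj C) (k : pfam A P) (r : pfam P A),
    tempered A /\ psplit (es i) k r.
  by case: (prim i) => mi ii _; apply: pidem_split.
have [Y /dependent_choice [k /dependent_choice [r split_es]]] := dependent_choice split_ex.
exists n, Y, P, k, r; split=> //; last exact: p_iso_refl.
- move=> i; have [tY sY] := split_es i; split=> //.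
  by case: (prim i) => _ _; apply: indec_of_primitive sY.
- split.
  + by move=> i; case: (split_es i) => _ [].
  + by move=> i p; case: (split_es i) => _ [].
  + move=> i j ij p; have [_ si] := split_es i; have [_ sj] := split_es j.
    rewrite /pcomp /pzero -(psplit_re si) -(psplit_ek sj) -compA.
    by rewrite [comp (es i p) _]compA orth // comp0l comp0r.
  + move=> p; rewrite -[idm _]/(pid P p) -sum; apply: eq_bigr => i _.
    by case: (split_es i) => _ [_ _ _ ->].
Qed.

End KrullSchmidt.

Theorem proposition2p7 (F : fieldType) (C : LinAbCat F) :
  tempered_KrullSchmidt C.
Proof.
split; first exact: tempered_decomposition.
by move=> P tP; apply: local_of_indec.
Qed.
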